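(* Let $d\ge 2$, $n\ge1$, $0\le k<n$ be integers. The number $N(n,k,d)$ of $[[n,k]]_d$ stabilizer codes equals $$N(n,k,d)=\frac{|\mathrm{Sp}(2n,\mathbb{Z}_d)|}{|T(n,k,d)|},$$ where $T(n,k,d)$ is the set of all $M\in\mathrm{Sp}(2n,\mathbb{Z}_d)$ which, in block form with respect to the partition of rows and columns into consecutive blocks of sizes $(n-k,k,n-k,k)$, have the form $$M=\begin{pmatrix}(A^T)^{-1}&0&0&0\\ M_{21}&M_{22}&0&M_{24}\\ M_{31}&M_{32}&A&M_{34}\\ M_{41}&M_{42}&0&M_{44}\end{pmatrix}$$ with $A\in\mathrm{GL}(n-k,\mathbb{Z}_d)$ and the other blocks arbitrary (for $k=0$: $M=\begin{pmatrix}(A^T)^{-1}&0\\ M_{31}&A\end{pmatrix}$).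
   Context: $\mathbb{Z}_d$ is the ring of integers mod $d$; $\Lambda=\begin{pmatrix}0&I_n\\-I_n&0\end{pmatrix}$, $\mathrm{Sp}(2n,\mathbb{Z}_d)=\{M\in M_{2n}(\mathbb{Z}_d):M^T\Lambda M=\Lambda\}$. Vectors $a_1,\dots,a_m\in\mathbb{Z}_d^{N}$ are linearly independent if $\sum_i x_ia_i=0$ with $x_i\in\mathbb{Z}_d$ forces all $x_i=0$. Qudits: on $\mathbb{C}^d$ with orthonormal basis $\{|j\rangle\}_{j\in\mathbb{Z}_d}$ let $X|j\rangle=|j+1\rangle$, $Z|j\rangle=\omega^j|j\rangle$, $\omega=e^{2\pi i/d}$. The $n$-qudit Pauli group $\mathcal{P}_n$ is generated by the operators $X_j,Z_j$ (acting as $X$, resp. $Z$, on the $j$-th tensor factor of $(\mathbb{C}^d)^{\otimes n}$), together with $e^{\pi i/d}I$ when $d$ is even. Every element of $\mathcal{P}_n$ is a phase times $g(a)=X^{u_1}Z^{v_1}\otimes\cdots\otimes X^{u_n}Z^{v_n}$ for a unique $a=(u,v)\in\mathbb{Z}_d^{2n}$, and $g(a),g(b)$ commute iff $a^T\Lambda b=0$. An $[[n,k]]_d$ stabilizer group is $S=\langle g_1,\dots,g_{n-k}\rangle$ with $g_j\in\mathcal{P}_n$ pairwise commuting, each having $+1$ as an eigenvalue, and $|S|=d^{n-k}$; its code space is $\mathcal{C}(S)=\{\psi: g\psi=\psi\ \forall g\in S\}$, of dimension $d^k$. Writing $g_j$ as a phase times $g(a_j)$, the check matrix is the $2n\times(n-k)$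 matrix $H=[a_1|\cdots|a_{n-k}]$; its columns are linearly independent and satisfy $a_i^T\Lambda a_j=0$. Two stabilizer groups define the same $[[n,k]]_d$ stabilizer code iff their check matrices satisfy $H'=HA$ for some $A\in\mathrm{GL}(n-k,\mathbb{Z}_d)$ (in particular, stabilizer groups differing only by phases of the generators define the same code); equivalently, a code is determined by the subgroup of $\mathbb{Z}_d^{2n}$ spanned by the columns of its check matrix, i.e. by the span of $n-k$ linearly independent, pairwise symplectically orthogonal vectors of $\mathbb{Z}_d^{2n}$. *)

From mathcomp Require Import all_boot all_order all_algebra.
Set Implicit Arguments. Unset Strict Implicit. Unset Printing Implicit Defensive.
Import GRing.Theory.
Local Open Scope ring_scope.

(* Coordinates of Z_d^{2n} are indexed by 'I_(n+n): first n = u-part, last n = v-part. *)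

Definition Lambda (d n : nat) : 'M['Z_d]_(n + n) :=
  block_mx 0 1%:M (- 1%:M) 0.

Definition Sp (d n : nat) : {set 'M['Z_d]_(n + n)} :=
  [set M : 'M['Z_d]_(n + n) | M^T *m Lambda d n *m M == Lambda d n].

Definition symp (d n : nat) (a b : 'cV['Z_d]_(n + n)) : 'M['Z_d]_1 :=
  a^T *m Lambda d n *m b.

Definition lin_indep (d N m : nat) (a : {ffun 'I_m -> 'cV['Z_d]_N}) : bool :=
  [forall x : {ffun 'I_m -> 'Z_d},
     (\sum_(i < m) x i *: a i == 0) ==> [forall i, x i == 0]].

Definition span_set (d N m : nat) (a : {ffun 'I_m -> 'cV['Z_d]_N}) : {set 'cV['Z_d]_N} :=
  [set v | [exists x : {ffun 'I_m -> 'Z_d}, v == \sum_(i < m) x i *: a i]].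

(* [[n,k]]_d stabilizer codes, identified with the subgroups of Z_d^{2n} spanned by
   n-k linearly independent, pairwise symplectically orthogonal vectors. *)
Definition stab_codes (d n k : nat) : {set {set 'cV['Z_d]_(n + n)}} :=
  [set W | [exists a : {ffun 'I_(n - k) -> 'cV['Z_d]_(n + n)},
      [&& lin_indep a,
          [forall i, forall j, symp (a i) (a j) == 0]
        & W == span_set a]]].

Definition N_codes (d n k : nat) : nat := #|stab_codes d n k|.

(* embeddings of block 1 (indices 0..n-k-1) and block 3 (indices n..2n-k-1) *)
Definition emb1 (n k : nat) (i : 'I_(n - k)) : 'I_(n + n) :=
  lshift n (widen_ord (leq_subr k n) i).
Definition emb3 (n k : nat) (i : 'I_(n - k)) : 'I_(n + n) :=
  rshift n (widen_ord (leq_subr k n) i).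

Definition in_blk3 (n k : nat) (i : 'I_(n + n)) : bool := ((n <= i) && (i < n + (n - k)))%N.

(* T(n,k,d): symplectic matrices of the displayed block form with blocks
   (n-k, k, n-k, k): block (1,1) = (A^T)^{-1}, block (3,3) = A, A invertible,
   row-block 1 zero outside column-block 1, column-block 3 zero outside row-block 3. *)
Definition Tset (d n k : nat) : {set 'M['Z_d]_(n + n)} :=
  [set M in Sp d n | [exists A : 'M['Z_d]_(n - k),
     [&& A \in unitmx,
         [forall i, forall j, M (@emb1 n k i) (@emb1 n k j) == (invmx A^T) i j],
         [forall i, forall j, M (@emb3 n k i) (@emb3 n k j) == A i j],
         [forall i : 'I_(n + n), forall j : 'I_(n + n),
            ((i < n - k)%N && ~~ (j < n - k)%N) ==> (M i j == 0)]
       & [forall i : 'I_(n + n), forall j : 'I_(n + n),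
            (@in_blk3 n k j && ~~ @in_blk3 n k i) ==> (M i j == 0)]]]].

From mathcomp Require Import all_boot all_order all_algebra.
From mathcomp Require Import ring.
Set Implicit Arguments. Unset Strict Implicit. Unset Printing Implicit Defensive.
Import GRing.Theory.
Local Open Scope ring_scope.

(* The map M |-> M^T W0, where W0 is spanned by the first m = n - k standard
   vectors e_i of Z_d^(2n), sends Sp(2n, Z_d) onto the [[n,k]]_d codes, and its
   fibres are the cosets T M with T in T(n,k,d), the stabilizer of W0; hence
   |Sp| = N |T|.  Surjectivity is a Witt-type extension: a free isotropic family
   a_0, ..., a_(m-1) is moved onto e_0, ..., e_(m-1) one vector at a time, each
   step being a product of three symplectic transvections.  This works over Z_d
   because Z_d has stable range one and a vector with zero annihilator is
   unimodular. *)

Lemma mulmx_deltaE (R : pzSemiRingType) m n (M : 'M[R]_(m, n)) i j :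
  (M *m delta_mx j (0 : 'I_1)) i 0 = M i j.
Proof. by rewrite -colE mxE. Qed.

Section Symplectic.
Variables (R : comUnitRingType) (n : nat).
Local Notation V := 'cV[R]_(n + n).

Definition Lam : 'M[R]_(n + n) := block_mx 0 1%:M (- 1%:M) 0.
Definition symplectic (M : 'M[R]_(n + n)) : bool := M^T *m Lam *m M == Lam.
Definition sp (p q : V) : R := (p^T *m Lam *m q) 0 0.

Lemma mul_Lam_col (u v : 'cV[R]_n) : Lam *m col_mx u v = col_mx v (- u).
Proof. by rewrite mul_block_col !mul0mx mul1mx add0r addr0 mulNmx mul1mx. Qed.

Lemma mul_Lam_lshift (v : V) i : (Lam *m v) (lshift n i) 0 = v (rshift n i) 0.
Proof. by rewrite -[in LHS](vsubmxK v) mul_Lam_col col_mxEu mxE. Qed.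

Lemma mul_Lam_rshift (v : V) i : (Lam *m v) (rshift n i) 0 = - v (lshift n i) 0.
Proof. by rewrite -[in LHS](vsubmxK v) mul_Lam_col col_mxEd !mxE. Qed.

Lemma trLam : Lam^T = - Lam.
Proof.
by rewrite tr_block_mx !trmx0 trmx1 linearN /= trmx1 opp_block_mx !oppr0 opprK.
Qed.

Lemma mulLamLam : Lam *m Lam = - 1%:M.
Proof.
rewrite mulmx_block !mul0mx !mulmx0 !add0r !addr0 mulmx1 mul1mx.
by rewrite (scalar_mx_block n n 1) opp_block_mx oppr0.
Qed.

Lemma mulTLamLam : Lam^T *m Lam = 1%:M.
Proof. by rewrite trLam mulNmx mulLamLam opprK. Qed.

Lemma sp_mx p q : p^T *m Lam *m q = (sp p q)%:M.
Proof. exact: mx11_scalar. Qed.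

Lemma spE p q : sp p q = \sum_(i < n) (p (lshift n i) 0 * q (rshift n i) 0
                                      - p (rshift n i) 0 * q (lshift n i) 0).
Proof.
rewrite /sp -(vsubmxK q) -{1}(vsubmxK p) -mulmxA mul_Lam_col tr_col_mx.
rewrite mul_row_col !mxE vsubmxK -big_split; apply: eq_bigr => i _ /=.
by rewrite !mxE mulrN.
Qed.

Lemma sp_xx p : sp p p = 0.
Proof. by rewrite spE big1 // => i _; rewrite mulrC subrr. Qed.

Lemma sp_skew p q : sp p q = - sp q p.
Proof.
rewrite !spE -sumrN; apply: eq_bigr => i _.
by rewrite opprB [_ (rshift n i) 0 * _]mulrC [_ (lshift n i) 0 * _]mulrC.
Qed.

Lemma spBl p1 p2 q : sp (p1 - p2) q = sp p1 q - sp p2 q.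
Proof. by rewrite /sp linearB /= !mulmxBl !mxE. Qed.

Lemma sp_Lam_l (r : 'rV[R]_(n + n)) q : sp (Lam *m r^T) q = (r *m q) 0 0.
Proof. by rewrite /sp trmx_mul trmxK -(mulmxA r) mulTLamLam mulmx1. Qed.

Definition evec (j : 'I_n) : V := delta_mx (lshift n j) 0.
Definition fvec (j : 'I_n) : V := delta_mx (rshift n j) 0.

Lemma evec_lshift j i : evec j (lshift n i) 0 = (i == j)%:R.
Proof. by rewrite mxE eq_shift andbT. Qed.
Lemma evec_rshift j i : evec j (rshift n i) 0 = 0.
Proof. by rewrite mxE eq_shift. Qed.
Lemma fvec_lshift j i : fvec j (lshift n i) 0 = 0.
Proof. by rewrite mxE eq_shift. Qed.
Lemma fvec_rshift j i : fvec j (rshift n i) 0 = (i == j)%:R.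
Proof. by rewrite mxE eq_shift andbT. Qed.

Lemma sp_evec_l j q : sp (evec j) q = q (rshift n j) 0.
Proof. by rewrite /sp trmx_delta -mulmxA -rowE mxE mul_Lam_lshift. Qed.
Lemma sp_fvec_l j q : sp (fvec j) q = - q (lshift n j) 0.
Proof. by rewrite /sp trmx_delta -mulmxA -rowE mxE mul_Lam_rshift. Qed.
Lemma sp_evec_r j p : sp p (evec j) = - p (rshift n j) 0.
Proof. by rewrite sp_skew sp_evec_l. Qed.

Lemma fvecE j : fvec j = - (Lam *m evec j).
Proof.
apply/matrixP => r c; rewrite (ord1 c) [RHS]mxE -(splitK r).
by case: (split r) => i /=; rewrite ?mul_Lam_lshift ?mul_Lam_rshift
  ?fvec_lshift ?fvec_rshift ?evec_lshift ?evec_rshift ?oppr0 ?opprK.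
Qed.

Lemma symplecticP M : reflect (M^T *m Lam *m M = Lam) (symplectic M).
Proof. exact: eqP. Qed.

Lemma symplectic1 : symplectic 1%:M.
Proof. by apply/symplecticP; rewrite trmx1 mul1mx mulmx1. Qed.

Lemma symplectic_mul M N : symplectic M -> symplectic N -> symplectic (M *m N).
Proof.
move=> /symplecticP SM /symplecticP SN; apply/symplecticP.
by rewrite trmx_mul !mulmxA -(mulmxA N^T) -(mulmxA N^T) SM.
Qed.

Lemma symplectic_linv M : symplectic M -> (- (Lam *m M^T *m Lam)) *m M = 1%:M.
Proof.
by move/symplecticP=> SM; rewrite mulNmx -!mulmxA (mulmxA M^T) SM mulLamLam opprK.
Qed.

Lemma symplectic_unit M : symplectic M -> M \in unitmx.
Proof. by move/symplectic_linv/mulmx1_unit=> []. Qed.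

Lemma symplectic_tr M : symplectic M -> symplectic M^T.
Proof.
move/symplectic_linv/mulmx1C; rewrite mulmxN !mulmxA => /(congr1 (mulmx^~ Lam)).
rewrite mulNmx -!mulmxA mulLamLam !mulmxN mulmx1 opprK mul1mx !mulmxA => E.
by apply/symplecticP; rewrite trmxK.
Qed.

Lemma symplectic_inv M : symplectic M -> symplectic (invmx M).
Proof.
move=> SM; have Mu := symplectic_unit SM; move/symplecticP: (SM) => E.
apply/symplecticP; rewrite trmx_inv -{1}E !mulmxA mulVmx ?unitmx_tr // mul1mx.
by rewrite -mulmxA mulmxV // mulmx1.
Qed.

Lemma sp_symplectic M p q : symplectic M -> sp (M *m p) (M *m q) = sp p q.
Proof.
by move/symplecticP=> SM; rewrite /sp trmx_mul !mulmxA -(mulmxA p^T) -(mulmxA p^T) SM.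
Qed.

Definition transvection (c : R) (w : V) : 'M[R]_(n + n) :=
  1%:M + c *: (w *m (w^T *m Lam)).

Lemma transvectionE c w p : transvection c w *m p = p + (c * sp w p) *: w.
Proof.
by rewrite mulmxDl mul1mx -scalemxAl -!mulmxA (mulmxA w^T) sp_mx mul_mx_scalar scalerA.
Qed.

Lemma transvection_symplectic c w : symplectic (transvection c w).
Proof.
apply/symplecticP; rewrite /transvection; set X := w *m (w^T *m Lam).
have XTLam : X^T *m Lam = - (Lam *m X).
  by rewrite !trmx_mul trmxK trLam !mulNmx /X !mulmxA.
have XX : X *m X = 0.
  have wLw : w^T *m Lam *m w = 0 by rewrite sp_mx sp_xx raddf0.
  by rewrite /X !mulmxA -(mulmxA w w^T) -(mulmxA w (w^T *m Lam)) wLw mulmx0 !mul0mx.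
have XLamX : X^T *m Lam *m X = 0 by rewrite XTLam mulNmx -mulmxA XX mulmx0 oppr0.
rewrite [(_ + _)^T]linearD /= [(_ *: _)^T]linearZ /= trmx1 mulmxDl mul1mx !mulmxDr mulmx1.
by rewrite mulmxDl -!scalemxAl -!scalemxAr XLamX !scaler0 addr0 XTLam scalerN addrNK.
Qed.

Lemma transvection_fix c w p : sp w p = 0 -> transvection c w *m p = p.
Proof. by move=> wp; rewrite transvectionE wp mulr0 scale0r addr0. Qed.

Lemma transvection_move x y :
  sp y x \is a GRing.unit -> transvection (sp y x)^-1 (y - x) *m x = y.
Proof.
move=> yx; rewrite transvectionE spBl sp_xx subr0 mulVr // scale1r.
by rewrite addrC subrK.
Qed.

End Symplectic.

Definition faithful (R : comUnitRingType) N (z : 'cV[R]_N) : Prop :=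
  forall y : R, y *: z = 0 -> y = 0.

Definition faithful_unimodular (R : comUnitRingType) : Prop :=
  forall N (z : 'cV[R]_N), faithful z -> exists l : 'rV[R]_N, l *m z = 1%:M.

Definition stable_range1 (R : comUnitRingType) : Prop :=
  forall a b c e : R, c * a + e * b = 1 -> exists t, a + t * b \is a GRing.unit.

Section WittExtension.
Variables (R : comUnitRingType) (n : nat).
Hypothesis R_unimodular : faithful_unimodular R.
Hypothesis R_stable_range : stable_range1 R.
Local Notation V := 'cV[R]_(n + n).
Local Notation Lam := (Lam R n).
Local Notation evec := (@evec R n).
Local Notation fvec := (@fvec R n).

Definition independent m (a : 'I_m -> V) : Prop :=
  forall x : 'I_m -> R, \sum_i x i *: a i = 0 -> forall i, x i = 0.

Definition isotropic m (a : 'I_m -> V) : Prop := forall i j, sp (a i) (a j) = 0.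

Definition proj_tail m : 'M[R]_(n + n) := diag_mx (\row_(r < n + n) ((m <= r)%N)%:R).

Lemma sum_evecE m (Hm : (m <= n)%N) (c : 'I_m -> R) r :
  (\sum_i c i *: evec (widen_ord Hm i)) r 0 = if insub (val r) is Some i then c i else 0.
Proof.
have E j : (c j *: evec (widen_ord Hm j)) r 0 = c j * (val r == val j)%:R.
  by rewrite !mxE andbT -val_eqE.
rewrite summxE (eq_bigr _ (fun j _ => E j)); case: insubP => [i _ ri | rm].
  rewrite -ri (bigD1 i) //= eqxx mulr1 big1 ?addr0 // => j ji.
  by rewrite val_eqE eq_sym (negbTE ji) mulr0.
rewrite big1 // => j _; rewrite (_ : (val r == val j) = false) ?mulr0 //.
by apply: contraNF _ rm => /eqP ->; apply: ltn_ord.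
Qed.

Lemma proj_tailE m (Hm : (m <= n)%N) x :
  proj_tail m *m x = x - \sum_i x (lshift n (widen_ord Hm i)) 0 *: evec (widen_ord Hm i).
Proof.
apply/matrixP => r c; rewrite (ord1 c) mul_diag_mx !mxE sum_evecE.
case: insubP => [i ri vr | /negbTE rm]; last by rewrite leqNgt rm mul1r subr0.
rewrite leqNgt ri mul0r (_ : r = lshift n (widen_ord Hm i)) ?subrr //.
exact: val_inj.
Qed.

Definition extend_coef m (x : 'I_m -> R) (c : R) (j : 'I_m.+1) : R :=
  if insub (val j) is Some i then x i else c.

Lemma sum_extend_coef m (a : 'I_m.+1 -> V) x c :
  \sum_j extend_coef x c j *: a j =
    \sum_i x i *: a (widen_ord (leqnSn m) i) + c *: a ord_max.
Proof.
rewrite big_ord_recr /= /extend_coef insubF ?ltnn //; congr (_ + _).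
by apply: eq_bigr => i _; rewrite valK.
Qed.

Lemma independent_widen m (a : 'I_m.+1 -> V) :
  independent a -> independent (fun i => a (widen_ord (leqnSn m) i)).
Proof.
move=> LIa x Hx i; have := LIa (extend_coef x 0) _ (widen_ord (leqnSn m) i).
by rewrite /extend_coef valK; apply; rewrite sum_extend_coef Hx scale0r addr0.
Qed.

Lemma faithful_proj_tail m (ltmn : (m < n)%N) S (a : 'I_m.+1 -> V) :
    S \in unitmx -> independent a ->
    (forall i, S *m a (widen_ord (leqnSn m) i) = evec (widen_ord (ltnW ltmn) i)) ->
  faithful (proj_tail m *m (S *m a ord_max)).
Proof.
move=> Su LIa Sa y; set x := S *m a ord_max; rewrite (proj_tailE (ltnW ltmn)) => yx.
pose c i := - (y * x (lshift n (widen_ord (ltnW ltmn) i)) 0).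
suff /(_ ord_max) : forall j, extend_coef c y j = 0 by rewrite /extend_coef insubF ?ltnn.
apply: LIa; apply: (can_inj (mulKmx Su)); rewrite mulmx0 sum_extend_coef mulmxDr.
rewrite -scalemxAr -/x -[RHS]yx scalerBr addrC scaler_sumr -sumrN mulmx_sumr.
congr (_ + _); apply: eq_bigr => i _.
by rewrite -scalemxAr Sa scalerA scaleNr.
Qed.

Lemma exists_pivot m (ltmn : (m < n)%N) (x : V) : faithful (proj_tail m *m x) ->
  exists q : V, [/\ sp q x = 1, q (lshift n (Ordinal ltmn)) 0 \is a GRing.unit
                  & forall j : 'I_n, (j < m)%N -> q (rshift n j) 0 = 0].
Proof.
move=> /R_unimodular[l lx]; set r0 := l *m proj_tail m.
have r0x : r0 *m x = 1%:M by rewrite -mulmxA.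
have r0_head (j : 'I_n) : (j < m)%N -> r0 0 (lshift n j) = 0.
  by move=> ltjm; rewrite /r0 mul_mx_diag !mxE /= leqNgt ltjm mulr0.
clearbody r0.
set v := rshift n (Ordinal ltmn); set xv := x v 0; set a := r0 0 v.
have [t ut] : exists t, a + t * (1 - xv * a) \is a GRing.unit.
  by apply: (R_stable_range (c := xv) (e := 1)); rewrite mul1r addrC subrK.
(* [sp (Lam *m r^T) x = r x = 1], and the pivot entry [r 0 v] is the unit above. *)
pose r := (1 - t * xv) *: r0 + t *: delta_mx 0 v.
exists (Lam *m r^T); split.
- rewrite sp_Lam_l mulmxDl -!scalemxAl r0x -rowE !mxE eqxx.
  by rewrite mulr1n mulr1 subrK.
- rewrite mul_Lam_lshift !mxE -/v !eqxx -/a mulr1; congr (_ \is a _): ut; ring.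
- move=> j ltjm; rewrite mul_Lam_rshift !mxE r0_head // eq_shift.
  by rewrite mulr0 add0r mulr0 oppr0.
Qed.

Lemma transvections_to_evec m (ltmn : (m < n)%N) (x q : V) :
    sp q x = 1 -> q (lshift n (Ordinal ltmn)) 0 \is a GRing.unit ->
    (forall j : 'I_n, (j < m)%N -> q (rshift n j) 0 = 0 /\ x (rshift n j) 0 = 0) ->
  exists2 T, symplectic T &
    T *m x = evec (Ordinal ltmn) /\ forall j : 'I_n, (j < m)%N -> T *m evec j = evec j.
Proof.
(* x -> q -> fvec i -> evec i; each evec j, j < m, is orthogonal to both ends of
   every step, hence fixed. *)
move=> qx qu qxv; set i := Ordinal ltmn.
have ef : sp (evec i) (fvec i) = 1 by rewrite sp_evec_l fvec_rshift eqxx.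
have fq : sp (fvec i) q \is a GRing.unit by rewrite sp_fvec_l unitrN.
exists (transvection (sp (evec i) (fvec i))^-1 (evec i - fvec i) *m
        transvection (sp (fvec i) q)^-1 (fvec i - q) *m
        transvection (sp q x)^-1 (q - x)).
  by rewrite !symplectic_mul ?transvection_symplectic.
split; first by rewrite -!mulmxA !transvection_move ?qx ?ef ?unitr1.
move=> j ltjm; have [qj xj] := qxv j ltjm.
have fj : fvec i (rshift n j) 0 = 0.
  by rewrite fvec_rshift (_ : j == i = false) //; apply: contraTF ltjm => /eqP ->; rewrite ltnn.
by rewrite -!mulmxA !transvection_fix // spBl !sp_evec_r ?qj ?xj ?fj ?evec_rshift subrr.
Qed.

Lemma Witt_extension m (Hm : (m <= n)%N) (a : 'I_m -> V) :
  independent a -> isotropic a ->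
  exists2 S, symplectic S & forall i, S *m a i = evec (widen_ord Hm i).
Proof.
elim: m Hm a => [|m IH] ltmn a LIa ISOa; first by exists 1%:M; [exact: symplectic1 | case].
have [S SS Sa] := IH (ltnW ltmn) _ (independent_widen LIa) (fun i j => ISOa _ _).
set x := S *m a ord_max.
have xv (j : 'I_n) : (j < m)%N -> x (rshift n j) 0 = 0.
  move=> ltjm; rewrite -sp_evec_l (_ : j = widen_ord (ltnW ltmn) (Ordinal ltjm)).
    by rewrite -Sa sp_symplectic.
  exact: val_inj.
have [q [qx qu qv]] := exists_pivot ltmn (faithful_proj_tail (symplectic_unit SS) LIa Sa).
have [T ST [Tx Te]] := transvections_to_evec qx qu (fun j ltjm => conj (qv j ltjm) (xv j ltjm)).
exists (T *m S); first exact: symplectic_mul.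
move=> i; rewrite -mulmxA; have [ltim | leim] := ltnP i m.
  rewrite (_ : i = widen_ord (leqnSn m) (Ordinal ltim)); last exact: val_inj.
  by rewrite Sa Te //; congr evec; apply: val_inj.
rewrite (_ : i = ord_max) ?Tx; last by apply/val_inj/eqP; rewrite eqn_leq leim andbT -ltnS ltn_ord.
by congr evec; apply: val_inj.
Qed.

End WittExtension.

Lemma prime_ndvd_coprime a b :
  (0 < a)%N -> (forall q, prime q -> q %| a -> ~~ (q %| b))%N -> coprime a b.
Proof.
move=> a_gt0 ndvd; apply: contraT => nab.
have g_gt1 : (1 < gcdn a b)%N by rewrite ltn_neqAle eq_sym nab gcdn_gt0 a_gt0.
have := ndvd _ (pdiv_prime g_gt1) (dvdn_trans (pdiv_dvd _) (dvdn_gcdl a b)).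
by rewrite (dvdn_trans (pdiv_dvd _) (dvdn_gcdr a b)).
Qed.

Section IntegersMod.
Variable p : nat.
Local Notation N := p.+2.

Lemma Zp_natE (x : 'Z_N) : x = (val x)%:R.
Proof. by rewrite natr_Zp. Qed.

Lemma Zp_nat_eq0 k : ((k%:R : 'Z_N) == 0) = (N %| k)%N.
Proof. by rewrite -val_eqE /= val_Zp_nat. Qed.

Lemma Zp_stable_range1 : stable_range1 'Z_N.
Proof.
move=> a b c e cae; set A := val a; set B := val b.
have cAeB : ((val c * A + val e * B) %% N = 1)%N.
  have : ((val c * A + val e * B)%:R : 'Z_N) = 1 by rewrite natrD !natrM -!Zp_natE.
  by move/(congr1 val); rewrite /= val_Zp_nat.
(* Every prime divisor of N divides exactly one of A and T * B. *)
pose T := (\prod_(q <- primes N | ~~ (q %| A)) q)%N.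
exists T%:R; rewrite [a]Zp_natE [b]Zp_natE -natrM -natrD unitZpE //.
apply: prime_ndvd_coprime => // q q_pr qN.
have qT : (q %| T)%N = ~~ (q %| A)%N.
  rewrite Euclid_dvd_prod // big_has_cond; apply/hasP/idP => [[r]|qA].
    rewrite mem_primes => /and3P[r_pr _ _] /andP[rA].
    by rewrite dvdn_prime2 // => /eqP ->.
  by exists q; rewrite ?mem_primes ?q_pr ?qN //= qA dvdnn.
have [qA | qA] := boolP (q %| A)%N; last by rewrite dvdn_addl ?(negPf qA) // dvdn_mulr ?qT.
rewrite dvdn_addr // Euclid_dvdM // qT qA /=; apply/negP => qB.
have : (q %| val c * A + val e * B)%N by rewrite dvdn_add ?dvdn_mull.
by rewrite /dvdn -(modn_dvdm _ qN) cAeB modn_small ?prime_gt1.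
Qed.

Lemma Zp_faithful_unimodular : faithful_unimodular 'Z_N.
Proof.
move=> K z zF.
(* The least positive attained g divides N and every entry of z, so N %/ g
   kills z. *)
pose attained g := [exists l : 'rV_K, l *m z == (g%:R)%:M].
have N0 : (N%:R : 'Z_N) = 0 by apply/eqP; rewrite Zp_nat_eq0.
have attainedN : attained N by apply/existsP; exists 0; rewrite mul0mx N0 raddf0.
have [g /andP[g_gt0 /existsP[l /eqP lz]] g_min] :=
  ex_minnP (ex_intro (fun g => (0 < g) && attained g)%N N attainedN).
have g_dvd W : attained W -> (g %| W)%N.
  case/existsP => l' /eqP l'z; apply: contraT => ngW.
  have r_gt0 : (0 < W %% g)%N by rewrite lt0n.
  suff : (g <= W %% g)%N by rewrite leqNgt ltn_pmod.
  apply: g_min; rewrite r_gt0; apply/existsP; exists (l' - (W %/ g)%:R *: l).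
  rewrite mulmxBl -scalemxAl l'z lz scale_scalar_mx -raddfB /= -natrM -natrB.
    by rewrite {1}(divn_eq W g) addKn.
  exact: leq_trunc_div.
have gN : (g %| N)%N by apply: g_dvd; rewrite attainedN.
have g_dvd_z j : (g %| val (z j ord0))%N.
  apply: g_dvd; apply/existsP; exists (delta_mx 0 j).
  by rewrite -rowE [row j z]mx11_scalar mxE -Zp_natE.
have /zF/eqP : (N %/ g)%:R *: z = 0.
  apply/matrixP => j i; rewrite (ord1 i) !mxE [z j 0]Zp_natE -natrM.
  have [h ->] := dvdnP (g_dvd_z j); apply/eqP; rewrite Zp_nat_eq0.
  by rewrite mulnCA divnK // dvdn_mull.
rewrite Zp_nat_eq0 => /dvdn_leq; rewrite divn_gt0 // dvdn_leq // => /(_ isT) le_N_Ng.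
have g1 : g = 1%N.
  apply/eqP; rewrite eqn_leq g_gt0 andbT leqNgt; apply: contraL le_N_Ng => g_gt1.
  by rewrite -ltnNge ltn_Pdiv.
by exists l; rewrite lz g1.
Qed.

End IntegersMod.

Section StabilizerCodes.
Variables p n k : nat.
Local Notation d := p.+2.
Local Notation R := 'Z_d.
Local Notation V := 'cV[R]_(n + n).
Local Notation m := (n - k)%N.
Local Notation Lam := (Lam R n).
Let le_mn : (m <= n)%N := leq_subr k n.
Local Notation e i := (evec R (widen_ord le_mn i)).

Lemma in_Sp M : (M \in Sp d n) = symplectic M.
Proof. by rewrite inE. Qed.

Lemma sympE (a b : V) : symp a b = (sp a b)%:M.
Proof. exact: mx11_scalar. Qed.

Definition std_code : {set V} :=
  [set v : V | [forall r : 'I_(n + n), (m <= r)%N ==> (v r 0 == 0)]].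

Lemma std_code_tail v (r : 'I_(n + n)) : v \in std_code -> (m <= r)%N -> v r 0 = 0.
Proof. by rewrite inE => /forallP/(_ r)/implyP vr /vr/eqP. Qed.

Lemma std_codeP v : reflect (exists x : 'I_m -> R, v = \sum_i x i *: e i) (v \in std_code).
Proof.
rewrite inE; apply: (iffP forallP) => [v0 | [x ->] r].
  exists (fun i => v (lshift n (widen_ord le_mn i)) 0); apply/eqP.
  rewrite -subr_eq0 -proj_tailE; apply/eqP/matrixP => r c.
  rewrite (ord1 c) mul_diag_mx !mxE; have /implyP := v0 r.
  by case: leqP => [_ /(_ isT)/eqP ->|]; rewrite ?mulr0 ?mul0r.
apply/implyP => le_m_r; rewrite sum_evecE insubF //.
by rewrite ltnNge le_m_r.
Qed.

Lemma std_code_evec i : e i \in std_code.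
Proof.
apply/std_codeP; exists (fun j => (j == i)%:R).
by rewrite (bigD1 i) //= eqxx scale1r big1 ?addr0 // => j /negbTE ->; rewrite scale0r.
Qed.

(* The transpose makes the stabilizer of [std_code] exactly [Tset], whose zero
   pattern is on rows. *)
Definition code_of (M : 'M[R]_(n + n)) : {set V} := [set M^T *m v | v in std_code].

Lemma span_std_code (M : 'M[R]_(n + n)) :
  span_set [ffun i => M *m e i] = [set M *m v | v in std_code].
Proof.
apply/setP => v; rewrite inE; apply/existsP/imsetP => [[x /eqP ->] | [w /std_codeP[x ->] ->]].
  exists (\sum_i x i *: e i); first by apply/std_codeP; exists x.
  by rewrite mulmx_sumr; apply: eq_bigr => i _; rewrite ffunE -scalemxAr.
exists [ffun i => x i]; apply/eqP; rewrite mulmx_sumr.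
by apply: eq_bigr => i _; rewrite !ffunE -scalemxAr.
Qed.

Lemma code_of_stab M : M \in Sp d n -> code_of M \in stab_codes d n k.
Proof.
rewrite in_Sp => SM; have MTu := symplectic_unit (symplectic_tr SM).
rewrite inE; apply/existsP; exists [ffun i => M^T *m e i]; apply/and3P; split.
- apply/forallP => x; apply/implyP => /eqP x0; apply/forallP => i.
  have : \sum_j x j *: e j = 0.
    apply: (can_inj (mulKmx MTu)); rewrite mulmx0 -[RHS]x0 mulmx_sumr.
    by apply: eq_bigr => j _; rewrite ffunE -scalemxAr.
  move/(congr1 (fun v : V => v (lshift n (widen_ord le_mn i)) 0)).
  by rewrite sum_evecE /= valK mxE => ->.
- apply/forallP => i; apply/forallP => j.
  by rewrite !ffunE sympE sp_symplectic ?symplectic_tr // sp_evec_l evec_rshift raddf0.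
- by rewrite span_std_code.
Qed.

Lemma code_of_onto W : W \in stab_codes d n k -> exists2 M, M \in Sp d n & code_of M = W.
Proof.
rewrite inE => /existsP[a /and3P[/forallP LIa /forallP ISOa /eqP ->]].
have [||S SS Sa] := Witt_extension (@Zp_faithful_unimodular p) (@Zp_stable_range1 p) le_mn (a := a).
- move=> x x0 i; have /implyP := LIa [ffun j => x j].
  under eq_bigr do rewrite ffunE.
  by rewrite x0 eqxx => /(_ isT)/forallP/(_ i); rewrite ffunE => /eqP.
- move=> i j; have /forallP/(_ j)/eqP := ISOa i.
  by rewrite sympE => /(congr1 (fun A : 'M_1 => A 0 0)); rewrite !mxE eqxx mulr1n.
exists (invmx S)^T; first by rewrite in_Sp symplectic_tr ?symplectic_inv.
rewrite /code_of trmxK -span_std_code; congr span_set; apply/ffunP => i.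
by rewrite ffunE -(Sa i) mulKmx ?symplectic_unit.
Qed.

Lemma code_of1 : code_of 1%:M = std_code.
Proof. by rewrite /code_of trmx1 (eq_imset _ (@mul1mx _ _ _)) imset_id. Qed.

Lemma code_of_mul A B : code_of (A *m B) = [set B^T *m v | v in code_of A].
Proof. by rewrite /code_of -imset_comp; apply: eq_imset => v; rewrite /= trmx_mul mulmxA. Qed.

Lemma in_blk3_lshift i : @in_blk3 n k (lshift n i) = false.
Proof. by rewrite /in_blk3 /= leqNgt ltn_ord. Qed.

Lemma in_blk3_rshift i : @in_blk3 n k (rshift n i) = (i < m)%N.
Proof. by rewrite /in_blk3 /= leq_addr ltn_add2l. Qed.

Definition ul_block (M : 'M[R]_(n + n)) : 'M[R]_m :=
  \matrix_(i, j) M (@emb1 n k i) (@emb1 n k j).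

Lemma ul_block_mul (B C : 'M[R]_(n + n)) :
    (forall (r : 'I_(n + n)) j, (m <= r)%N -> C r (@emb1 n k j) = 0) ->
  ul_block (B *m C) = ul_block B *m ul_block C.
Proof.
move=> C0; apply/matrixP => i j; rewrite !mxE.
have le_mnn : (m <= n + n)%N := leq_trans le_mn (leq_addr n n).
rewrite (bigID (fun r : 'I_(n + n) => (r < m)%N)) /= [X in _ + X]big1 ?addr0.
  rewrite (big_ord_narrow le_mnn); apply: eq_bigr => r _; rewrite !mxE.
  by congr (B _ _ * C _ _); apply: val_inj.
by move=> r; rewrite -leqNgt => /C0 ->; rewrite mulr0.
Qed.

Lemma ul_block1 : ul_block 1%:M = 1%:M.
Proof. by apply/matrixP => i j; rewrite !mxE eq_shift -val_eqE /= val_eqE. Qed.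

Section Stabilizer.
Variable T : 'M[R]_(n + n).
Hypotheses (ST : symplectic T) (TW : code_of T = std_code).
Local Notation X := (invmx T^T).

Lemma stab_upper (i j : 'I_(n + n)) : (i < m)%N -> (m <= j)%N -> T i j = 0.
Proof.
move=> ltim le_m_j; have : T^T *m delta_mx i 0 \in std_code.
  rewrite -TW imset_f // (_ : i = lshift n (widen_ord le_mn (Ordinal ltim))).
    exact: std_code_evec.
  exact: val_inj.
by move/std_code_tail/(_ le_m_j); rewrite mulmx_deltaE mxE.
Qed.

Lemma stab_inv_code w : w \in std_code -> X *m w \in std_code.
Proof. by rewrite -{1}TW => /imsetP[v vW ->]; rewrite mulKmx // unitmx_tr symplectic_unit. Qed.

Lemma stab_col3 (j : 'I_m) r : T r (@emb3 n k j) = - (Lam *m (X *m e j)) r 0.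
Proof.
have TLT : T *m Lam *m T^T = Lam by move/symplecticP: (symplectic_tr ST); rewrite trmxK.
have TLam : T *m Lam = Lam *m X.
  by rewrite -[in RHS]TLT -!mulmxA mulmxV ?mulmx1 // unitmx_tr symplectic_unit.
rewrite -[T r _]mulmx_deltaE -/(fvec R (widen_ord le_mn j)) fvecE mulmxN mulmxA TLam.
by rewrite -mulmxA mxE.
Qed.

Lemma stab_col3_out (j : 'I_m) r : ~~ @in_blk3 n k r -> T r (@emb3 n k j) = 0.
Proof.
have Xe := stab_inv_code (std_code_evec j).
rewrite stab_col3 -(splitK r); case: (split r) => i /=.
  by rewrite mul_Lam_lshift (std_code_tail Xe) ?oppr0 // (leq_trans le_mn) ?leq_addr.
by rewrite in_blk3_rshift -leqNgt => le_m_i; rewrite mul_Lam_rshift opprK std_code_tail.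
Qed.

Lemma stab_blk33 (i j : 'I_m) : T (@emb3 n k i) (@emb3 n k j) = X (@emb1 n k i) (@emb1 n k j).
Proof. by rewrite stab_col3 mul_Lam_rshift opprK mulmx_deltaE. Qed.

Lemma stab_blk11 : ul_block X \in unitmx /\ ul_block T = invmx (ul_block X)^T.
Proof.
have X0 (r : 'I_(n + n)) (j : 'I_m) : (m <= r)%N -> X r (@emb1 n k j) = 0.
  by move=> le_m_r; rewrite -mulmx_deltaE (std_code_tail (stab_inv_code (std_code_evec j))).
have PA : (ul_block T)^T *m ul_block X = 1%:M.
  have -> : (ul_block T)^T = ul_block T^T by apply/matrixP => i j; rewrite !mxE.
  by rewrite -ul_block_mul // mulmxV ?ul_block1 // unitmx_tr symplectic_unit.
have [_ Au] := mulmx1_unit PA; split => //.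
rewrite -trmx_inv -[ul_block T]trmxK; congr trmx.
by rewrite -[_^T]mulmx1 -(mulmxV Au) mulmxA PA mul1mx.
Qed.

Lemma stab_in_Tset : T \in Tset d n k.
Proof.
have [Au PE] := stab_blk11.
rewrite inE in_Sp ST /=; apply/existsP; exists (ul_block X); apply/and5P; split => //.
- by apply/forallP => i; apply/forallP => j; rewrite -PE mxE.
- by apply/forallP => i; apply/forallP => j; rewrite stab_blk33 mxE.
- apply/forallP => i; apply/forallP => j; apply/implyP => /andP[ltim].
  by rewrite -leqNgt => le_m_j; rewrite stab_upper.
apply/forallP => i; apply/forallP => j; apply/implyP => /andP[].
rewrite -(splitK j); case: (split j) => j' /=; first by rewrite in_blk3_lshift.
rewrite in_blk3_rshift => ltjm; rewrite (_ : rshift n j' = @emb3 n k (Ordinal ltjm)).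
  by move/stab_col3_out ->.
exact: val_inj.
Qed.

End Stabilizer.

Lemma Tset_code_of T : T \in Tset d n k -> code_of T = std_code.
Proof.
rewrite inE in_Sp => /andP[ST /existsP[A /and5P[_ _ _ /forallP upper _]]].
have TTu : T^T \in unitmx by rewrite unitmx_tr symplectic_unit.
apply/eqP; rewrite eqEcard card_imset ?leqnn ?andbT; last exact: can_inj (mulKmx TTu).
apply/subsetP => _ /imsetP[v vW ->]; rewrite inE; apply/forallP => r; apply/implyP => le_m_r.
rewrite mxE big1 // => c _; rewrite mxE; have [ltcm | le_m_c] := ltnP c m.
  have /forallP/(_ r)/implyP := upper c.
  by rewrite ltcm -leqNgt le_m_r => /(_ isT)/eqP ->; rewrite mul0r.
by rewrite std_code_tail ?mulr0.
Qed.

Lemma Tset_stabilizer T : (T \in Tset d n k) = (T \in Sp d n) && (code_of T == std_code).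
Proof.
apply/idP/andP => [TT | [ST /eqP TW]]; last by apply: stab_in_Tset; rewrite -?in_Sp.
by split; [move: TT; rewrite inE => /andP[] | rewrite Tset_code_of].
Qed.

Lemma code_of_fiber M0 : M0 \in Sp d n ->
  [set M in Sp d n | code_of M == code_of M0] = [set T *m M0 | T in Tset d n k].
Proof.
rewrite in_Sp => S0; have U0 := symplectic_unit S0.
apply/setP => M; apply/idP/imsetP => [| [T TT ->]].
  rewrite inE in_Sp => /andP[SM /eqP MM0].
  exists (M *m invmx M0); last by rewrite mulmxKV.
  rewrite Tset_stabilizer in_Sp symplectic_mul ?symplectic_inv //=.
  by rewrite code_of_mul MM0 -code_of_mul mulmxV // code_of1.
move: TT; rewrite Tset_stabilizer in_Sp => /andP[ST /eqP TW].
by rewrite inE in_Sp symplectic_mul //= code_of_mul TW -code_of1 -code_of_mul mul1mx.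
Qed.

Lemma card_Sp : #|Sp d n| = (N_codes d n k * #|Tset d n k|)%N.
Proof.
transitivity (\sum_(W in stab_codes d n k) #|Tset d n k|)%N; last by rewrite sum_nat_const.
rewrite -sum1_card (partition_big code_of (mem (stab_codes d n k))) /=; last exact: code_of_stab.
apply: eq_bigr => W /code_of_onto[M0 SM0 <-]; rewrite sum1dep_card.
rewrite (eq_card (B := [set M in Sp d n | code_of M == code_of M0])); last first.
  by move=> M; rewrite !inE.
rewrite code_of_fiber // card_imset //; apply: can_inj (mulmxK _).
by rewrite symplectic_unit // -in_Sp.
Qed.

Lemma Tset_gt0 : (0 < #|Tset d n k|)%N.
Proof.
rewrite card_gt0; apply/set0Pn; exists 1%:M.
by rewrite Tset_stabilizer in_Sp symplectic1 code_of1 /=.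
Qed.

End StabilizerCodes.

Theorem lemma1 (d n k : nat) (hd : (1 < d)%N) (hn : (0 < n)%N) (hk : (k < n)%N) :
  (#|Tset d n k| %| #|Sp d n|)%N /\
  N_codes d n k = (#|Sp d n| %/ #|Tset d n k|)%N.
Proof.
(* The count holds without [hn] and [hk]. *)
case: d hd => [|[|p]] // _.
rewrite (card_Sp p n k); split; first exact: dvdn_mull.
by rewrite mulnK // Tset_gt0.
Qed.
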